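(* Let $L$ be a totally ordered normal incline and let $A$ be an $n\times n$ completely positive matrix over $L$. Then $\mathrm{CP\text{-}rank}(A)\le\max\{n,[n^2/4]\}$. Further, for $n\ge 4$, $A$ has an $[n^2/4]$-support $3$ rank $1$ CP-representation, i.e. there exist $m\le[n^2/4]$ column vectors $b_1,\dots,b_m\in L^n$, each having at most three entries different from $\mathbf{0}$, such that $A=\bigoplus_{j=1}^m b_jb_j^T$.
   Context: An incline is a nonempty set $L$ with binary operations $\oplus,\otimes$ such that $(L,\oplus)$ is a semilattice ($\oplus$ associative, commutative, idempotent), $(L,\otimes)$ is a semigroup, $x\otimes(y\oplus z)=(x\otimes y)\oplus(x\otimes z)$ and $x\oplus(x\otimes y)=x$ for all $x,y,z$. The order is $x\le y\iff x\oplus y=y$; $L$ is totally ordered if this order is total, and commutative if $\otimes$ is commutative. An r-ideal is a nonempty $J\subseteq L$ closed under $\oplus$ and under multiplication by arbitrary elements of $L$; a lattice ideal is a nonempty $J\subseteq L$ closed under $\oplus$ and downward closed. A commutative incline $L$ is normal if it has an additive identity $\mathbf{0}$ and a multiplicative identity $\mathbf{1}$ and: every singly generated r-ideal is a lattice ideal (LI-property); for each $x\in L$ there is a unique $c$ with $c\otimes c=x$ (unique square root property); $x\otimes y\le(x\otimes x)\oplus(y\otimes y)$ for all $x,y$ (AG-property). Matrix product: $(BC)_{ij}=\bigoplus_k b_{ik}\otimes c_{kj}$; matrix sum $\oplus$ is entrywise; $B^T$ is the transpose. $A$ is completely positive if $A=BB^T$ for some $n\times k$ matrix $B$ over $L$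 all of whose entries are of the form $c\otimes c$. The CP-rank of a completely positive $A$ is the smallest $k$ such that $A=BB^T$ with $B$ an $n\times k$ matrix over $L$. $[x]$ is the greatest integer not exceeding $x$. *)

From mathcomp Require Import all_boot.
Set Implicit Arguments. Unset Strict Implicit. Unset Printing Implicit Defensive.

Section Incline.
Variables (T : Type) (add mul : T -> T -> T).

Definition incline_le (x y : T) : Prop := add x y = y.

Definition is_incline : Prop :=
  (forall x y z, add x (add y z) = add (add x y) z) /\
  (forall x y, add x y = add y x) /\
  (forall x, add x x = x) /\
  (forall x y z, mul x (mul y z) = mul (mul x y) z) /\
  (forall x y z, mul x (add y z) = add (mul x y) (mul x z)) /\
  (forall x y, add x (mul x y) = x).

Definition totally_ordered : Prop := forall x y, incline_le x y \/ incline_le y x.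

Definition commutative_mul : Prop := forall x y, mul x y = mul y x.

Definition r_ideal (J : T -> Prop) : Prop :=
  (exists x, J x) /\
  (forall x y, J x -> J y -> J (add x y)) /\
  (forall x r, J x -> J (mul r x) /\ J (mul x r)).

Definition lattice_ideal (J : T -> Prop) : Prop :=
  (exists x, J x) /\
  (forall x y, J x -> J y -> J (add x y)) /\
  (forall x y, J y -> incline_le x y -> J x).

Definition gen_r_ideal (a : T) (x : T) : Prop :=
  forall J, r_ideal J -> J a -> J x.

Definition is_normal_incline (zero one : T) : Prop :=
  is_incline /\ commutative_mul /\
  (forall x, add zero x = x) /\
  (forall x, mul one x = x /\ mul x one = x) /\
  (* LI-property *)
  (forall a, lattice_ideal (gen_r_ideal a)) /\
  (forall x, exists c, mul c c = x /\ forall c', mul c' c' = x -> c' = c) /\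
  (* AG-property *)
  (forall x y, incline_le (mul x y) (add (mul x x) (mul y y))).

(* matrices are functions 'I_m -> 'I_n -> T; B B^T for B : n x k *)
Definition mul_tr (zero : T) (n k : nat) (B : 'I_n -> 'I_k -> T) : 'I_n -> 'I_n -> T :=
  fun i j => \big[add/zero]_(l < k) mul (B i l) (B j l).

Definition completely_positive (zero : T) (n : nat) (A : 'I_n -> 'I_n -> T) : Prop :=
  exists k (B : 'I_n -> 'I_k -> T),
    (forall i l, exists c, B i l = mul c c) /\
    (forall i j, A i j = mul_tr zero B i j).

Definition is_cp_rank (zero : T) (n : nat) (A : 'I_n -> 'I_n -> T) (r : nat) : Prop :=
  (exists B : 'I_n -> 'I_r -> T, forall i j, A i j = mul_tr zero B i j) /\
  (forall k, k < r -> ~ exists B : 'I_n -> 'I_k -> T,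
       forall i j, A i j = mul_tr zero B i j).

End Incline.

From mathcomp Require Import all_boot zify.
From Stdlib Require Import ClassicalEpsilon.
Set Implicit Arguments. Unset Strict Implicit. Unset Printing Implicit Defensive.

(* Over a totally ordered normal incline, a factorisation A = B B^T forces B_il <= c_i,
   where c_i is the square root of A_ii; hence A_ij <= c_i c_j and, by the LI-property,
   A_ij = c_i c_j s_ij with s symmetric and s_ii = 1.  A star (a, J), |J| <= 2, is the
   vector with entry c_a at a, c_j s_aj at j in J and 0 elsewhere; when s_aj s_ak <= s_jk
   for distinct j, k in J its outer product lies below A, so A is the sum of any family
   of such stars whose outer products attain every entry of A.
   Such a family is built by induction on the index set S: remove a pair p, q with s_pq
   maximal, choose a0 among the remaining indices with s_pa0 <= s_qa0, and add the
   |S| - 1 stars (p, {q, a0}), (q, {a0}) and (a, {p, q}) for the other a; this gives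
   [|S|^2/4] stars.  They miss at most one diagonal entry, and none when |S| >= 4,
   which singleton stars repair.  Neither the AG-property nor the requirement that the
   entries of B be squares is needed. *)

Lemma sqr_div4_sub2 m : 2 <= m -> (m - 2) ^ 2 %/ 4 + (m - 1) = m ^ 2 %/ 4.
Proof.
move=> /subnK <-; move: (m - 2) => k; rewrite addnK.
have -> : (k + 2) ^ 2 = k ^ 2 + (k + 1) * 4 by rewrite !expnS expn0; nia.
by rewrite divnDMl // addn2 addn1.
Qed.

Lemma leq_maxn_sqr_div4 n a u :
  a <= n ^ 2 %/ 4 -> u <= (n < 4) -> u <= n -> a + u <= maxn n (n ^ 2 %/ 4).
Proof. by case: n => [|[|[|[|k]]]] /=; lia. Qed.

Lemma cardsD1D1 (X : finType) (S : {set X}) p q :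
  p \in S -> q \in S -> p != q -> #|S :\ p :\ q| = #|S| - 2.
Proof.
move=> pS qS pq; have := cardsD1 p S; have := cardsD1 q (S :\ p).
by rewrite pS !inE qS eq_sym pq /=; lia.
Qed.

Section Incline.
Variables (T : Type) (add mul : T -> T -> T) (zero one : T).
Hypotheses (hI : is_incline add mul) (mulC : forall x y, mul x y = mul y x).
Hypotheses (add0 : forall x, add zero x = x) (mul1 : forall x, mul one x = x).
Hypothesis hLI : forall a, lattice_ideal add (gen_r_ideal add mul a).
Hypothesis hsqrt : forall x, exists c, mul c c = x /\ forall c', mul c' c' = x -> c' = c.
Hypothesis htot : totally_ordered add.

Local Notation le := (incline_le add).

Lemma addA x y z : add x (add y z) = add (add x y) z.
Proof. by case: hI. Qed.
Lemma addC x y : add x y = add y x.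
Proof. by case: hI => _ []. Qed.
Lemma addxx x : add x x = x.
Proof. by case: hI => _ [_ []]. Qed.
Lemma mulA x y z : mul x (mul y z) = mul (mul x y) z.
Proof. by case: hI => _ [_ [_ []]]. Qed.
Lemma mulDr x y z : mul x (add y z) = add (mul x y) (mul x z).
Proof. by case: hI => _ [_ [_ [_ []]]]. Qed.
Lemma add_absorb x y : add x (mul x y) = x.
Proof. by case: hI => _ [_ [_ [_ []]]]. Qed.

Lemma mulr1 x : mul x one = x.
Proof. by rewrite mulC mul1. Qed.
Lemma mulACA x y z w : mul (mul x y) (mul z w) = mul (mul x z) (mul y w).
Proof. by rewrite -!mulA (mulA y z) (mulC y z) -mulA. Qed.

Lemma le_refl x : le x x.
Proof. exact: addxx. Qed.
Lemma le_anti x y : le x y -> le y x -> x = y.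
Proof. by rewrite /incline_le => hxy hyx; rewrite -hxy addC. Qed.
Lemma le_trans x y z : le x y -> le y z -> le x z.
Proof. by rewrite /incline_le => hxy <-; rewrite addA hxy. Qed.
Lemma le0 x : le zero x.
Proof. exact: add0. Qed.
Lemma le_addl x y : le x (add x y).
Proof. by rewrite /incline_le addA addxx. Qed.
Lemma le_addr x y : le y (add x y).
Proof. by rewrite addC; apply: le_addl. Qed.
Lemma add_le x y z : le x z -> le y z -> le (add x y) z.
Proof. by rewrite /incline_le => hx hy; rewrite -addA hy hx. Qed.
Lemma le_mul2l z x y : le x y -> le (mul z x) (mul z y).
Proof. by rewrite /incline_le -mulDr => ->. Qed.
Lemma le_mul2r z x y : le x y -> le (mul x z) (mul y z).
Proof. by rewrite !(mulC _ z); apply: le_mul2l. Qed.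
Lemma le_mull x y : le (mul x y) x.
Proof. by rewrite /incline_le addC add_absorb. Qed.
Lemma le_mulr x y : le (mul x y) y.
Proof. by rewrite mulC; apply: le_mull. Qed.
Lemma le1 x : le x one.
Proof. by rewrite -{1}(mul1 x); apply: le_mull. Qed.
Lemma mul0 x : mul zero x = zero.
Proof. by apply: le_anti; [apply: le_mull | apply: le0]. Qed.
Lemma mulr0 x : mul x zero = zero.
Proof. by rewrite mulC mul0. Qed.

Lemma bigadd_le k (F : 'I_k -> T) x :
  (forall j, le (F j) x) -> le (\big[add/zero]_(j < k) F j) x.
Proof.
by move=> Fx; apply: (big_ind (fun y => le y x)) => [|y z|//]; [apply: le0 | apply: add_le].
Qed.

Lemma le_bigadd k (F : 'I_k -> T) j : le (F j) (\big[add/zero]_(j < k) F j).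
Proof.
elim: k F j => [|k IH] F j; first by case: j.
rewrite big_ord_recl; have [j' ->|->] := unliftP ord0 j; last exact: le_addl.
exact: le_trans (IH _ j') (le_addr _ _).
Qed.

Lemma bigadd_attained k (F : 'I_k -> T) x :
  (forall j, le (F j) x) -> (exists j, F j = x) -> \big[add/zero]_(j < k) F j = x.
Proof.
move=> Fx [j Fj]; apply: le_anti (bigadd_le Fx) _.
by rewrite -Fj; apply: le_bigadd.
Qed.

(* By the LI-property [x] lies in the r-ideal generated by [y], which is [y L]. *)
Lemma le_divides x y : le x y -> exists r, x = mul y r.
Proof.
move=> xy; have [_ [_ down]] := hLI y.
have gen_y : gen_r_ideal add mul y y by [].
apply: (down x y gen_y xy (fun z => exists r, z = mul y r)); last by exists one; rewrite mulr1.
split; first by exists y, one; rewrite mulr1.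
split; first by move=> a b [r1 ->] [r2 ->]; exists (add r1 r2); rewrite mulDr.
move=> a r [r1 ->]; split; last by exists (mul r1 r); rewrite mulA.
by exists (mul r r1); rewrite mulA (mulC r y) mulA.
Qed.

Lemma le_of_le_sqr x y : le (mul x x) (mul y y) -> le x y.
Proof.
move=> le_sqr; have [//|yx] := htot x y.
have ge_sqr : le (mul y y) (mul x x) := le_trans (le_mul2l y yx) (le_mul2r x yx).
have [r [_ r_uniq]] := hsqrt (mul y y).
by rewrite (r_uniq x (le_anti le_sqr ge_sqr)) (r_uniq y erefl); apply: le_refl.
Qed.

Lemma cp_factor n (A : 'I_n -> 'I_n -> T) : completely_positive add mul zero A ->
  exists c s, [/\ forall i j, s i j = s j i, forall i, s i i = one &
                  forall i j, A i j = mul (mul (c i) (c j)) (s i j)].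
Proof.
move=> [k [B [_ defA]]].
have A_sym i j : A i j = A j i by rewrite !defA; apply: eq_bigr => l _; apply: mulC.
have [c sqr_c] : exists c, forall i, mul (c i) (c i) = A i i.
  apply: (choice (fun i r => mul r r = A i i)) => i.
  by have [r [sqr_r _]] := hsqrt (A i i); exists r.
have B_le i l : le (B i l) (c i).
  apply: le_of_le_sqr; rewrite sqr_c defA.
  exact: (le_bigadd (fun l => mul (B i l) (B i l))).
have A_le i j : le (A i j) (mul (c i) (c j)).
  rewrite defA; apply: bigadd_le => l.
  exact: le_trans (le_mul2r _ (B_le i l)) (le_mul2l _ (B_le j l)).
have [s0 defA0] : exists s0, forall ij : 'I_n * 'I_n,
    A ij.1 ij.2 = mul (mul (c ij.1) (c ij.2)) (s0 ij).
  apply: (choice (fun ij r => A ij.1 ij.2 = mul (mul (c ij.1) (c ij.2)) r)) => ij.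
  exact: le_divides (A_le _ _).
(* [s0] need not be symmetric: keep its upper triangle. *)
exists c, (fun i j : 'I_n => if i == j then one else if i < j then s0 (i, j) else s0 (j, i)).
split=> [i j | i | i j]; rewrite ?eqxx //.
  by rewrite eq_sym; case: ltngtP => // /val_inj ->.
have [<- | ij] := eqVneq i j; first by rewrite mulr1 sqr_c.
case: ifP => _; first exact: (defA0 (i, j)).
by rewrite A_sym (defA0 (j, i)) /= (mulC (c j)).
Qed.

Lemma seq_argmax (X : eqType) (f : X -> T) (a : X) (l : seq X) :
  exists2 x, x \in a :: l & {in a :: l, forall y, le (f y) (f x)}.
Proof.
elim: l a => [|b l IH] a.
  by exists a => [|y]; rewrite ?mem_seq1 // => /eqP ->; apply: le_refl.
have [x xl x_max] := IH b; have [ax|xa] := htot (f a) (f x).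
  exists x; first by rewrite in_cons xl orbT.
  by move=> y; rewrite in_cons => /predU1P [-> //|/x_max].
exists a; first exact: mem_head.
move=> y; rewrite in_cons => /predU1P [-> |/x_max yx]; first exact: le_refl.
exact: le_trans yx xa.
Qed.

Lemma exists_max_pair (X : finType) (s : X -> X -> T) (S : {set X}) : 1 < #|S| ->
  exists p q, [/\ p \in S, q \in S, p != q &
                  {in S &, forall a b, a != b -> le (s a b) (s p q)}].
Proof.
move=> /card_gt1P [x [y [xS yS xy]]].
pose P := [pred ab : X * X | [&& ab.1 \in S, ab.2 \in S & ab.1 != ab.2]].
have memP ab : (ab \in (x, y) :: enum P) = P ab.
  by rewrite in_cons mem_enum; case: eqP => // ->; rewrite /= xS yS xy.
have [[p q]] := seq_argmax (fun ab => s ab.1 ab.2) (x, y) (enum P).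
rewrite memP => /and3P [pS qS pq] pq_max; exists p, q; split=> // a b aS bS ab.
by apply: (pq_max (a, b)); rewrite memP /= aS bS ab.
Qed.

Definition support3_rep n (A : 'I_n -> 'I_n -> T) m :=
  exists b : 'I_m -> 'I_n -> T,
    (forall j, exists S : {set 'I_n}, #|S| <= 3 /\ forall i, i \notin S -> b j i = zero) /\
    (forall i i', A i i' = \big[add/zero]_(j < m) mul (b j i) (b j i')).

Section Stars.
Variables (n : nat) (c : 'I_n -> T) (s : 'I_n -> 'I_n -> T).
Hypotheses (s_sym : forall i j, s i j = s j i) (s_diag : forall i, s i i = one).

Definition Amat i j := mul (mul (c i) (c j)) (s i j).

Definition star := ('I_n * {set 'I_n})%type.

Definition star_vec (d : star) i :=
  if i == d.1 then c i else if i \in d.2 then mul (c i) (s d.1 i) else zero.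

Definition star_ok (d : star) :=
  #|d.2| <= 2 /\ {in d.2 &, forall j k, j != k -> le (mul (s d.1 j) (s d.1 k)) (s j k)}.

Definition covers (L : seq star) i j :=
  exists2 d, d \in L & mul (star_vec d i) (star_vec d j) = Amat i j.

Definition centers (L : seq star) : {set 'I_n} := [set d.1 | d in L].

Lemma Amat_sym i j : Amat i j = Amat j i.
Proof. by rewrite /Amat s_sym (mulC (c i)). Qed.

Lemma Amat_diag i : Amat i i = mul (c i) (c i).
Proof. by rewrite /Amat s_diag mulr1. Qed.

Lemma star_vec_le d i j : star_ok d -> le (mul (star_vec d i) (star_vec d j)) (Amat i j).
Proof.
case: d => a J [_ J_ok]; rewrite /star_vec /=.
have [-> | ia] := eqVneq i a; have [-> | ja] := eqVneq j a.
- by rewrite Amat_diag; apply: le_refl.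
- case: ifP => _; last by rewrite mulr0; apply: le0.
  by rewrite /Amat mulA; apply: le_refl.
- case: ifP => _; last by rewrite mul0; apply: le0.
  by rewrite Amat_sym /Amat mulC mulA s_sym; apply: le_refl.
case: ifP => iJ; last by rewrite mul0; apply: le0.
case: ifP => jJ; last by rewrite mulr0; apply: le0.
rewrite mulACA /Amat; apply: le_mul2l.
have [<- | ij] := eqVneq i j; first by rewrite s_diag; apply: le1.
exact: J_ok.
Qed.

Lemma star_vec_support d : star_ok d ->
  exists S : {set 'I_n}, #|S| <= 3 /\ forall i, i \notin S -> star_vec d i = zero.
Proof.
move=> [J2 _]; exists (d.1 |: d.2); split.
  by rewrite cardsU1; apply: leq_add (leq_b1 _) J2.
by move=> i; rewrite !inE negb_or /star_vec => /andP [/negbTE -> /negbTE ->].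
Qed.

Lemma star_ok_le1 a (J : {set 'I_n}) : #|J| <= 1 -> star_ok (a, J).
Proof.
move=> J1; split=> [|j k jJ kJ]; first exact: leq_trans J1 _.
by move/card_le1_eqP: J1 => /(_ j k jJ kJ) ->; rewrite eqxx.
Qed.

Lemma star_ok2 a u v : le (s a u) (s u v) \/ le (s a v) (s u v) -> star_ok (a, [set u; v]).
Proof.
move=> uv_bound; split=> [|j k]; first by rewrite cards2 ltnS leq_b1.
have key : le (mul (s a u) (s a v)) (s u v).
  by case: uv_bound => h; [apply: le_trans (le_mull _ _) h | apply: le_trans (le_mulr _ _) h].
by move=> /= /set2P [] -> /set2P [] ->; rewrite ?eqxx // => _; rewrite // mulC (s_sym v).
Qed.

Lemma covers_sym L i j : covers L i j -> covers L j i.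
Proof. by case=> d dL dij; exists d; rewrite // mulC Amat_sym. Qed.

Lemma covers_sub L1 L2 i j : {subset L1 <= L2} -> covers L1 i j -> covers L2 i j.
Proof. by move=> L12 [d dL dij]; exists d; first exact: L12. Qed.

Lemma covers_center (L : seq star) d : d \in L -> covers L d.1 d.1.
Proof. by exists d; rewrite // /star_vec eqxx Amat_diag. Qed.

Lemma covers_leaf (L : seq star) d j : d \in L -> j \in d.2 -> covers L d.1 j.
Proof.
move=> dL jd; have [-> | ja] := eqVneq j d.1; first exact: covers_center.
by exists d; rewrite // /star_vec eqxx (negbTE ja) jd /Amat mulA.
Qed.

Lemma mem_centers (L : seq star) d : d \in L -> d.1 \in centers L.
Proof. exact: imset_f. Qed.

(* The last clause says that all of [S] but at most one element, and all of [S]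
   once [#|S| >= 4], are centers of stars of [L]. *)
Definition cover_of (S : {set 'I_n}) (L : seq star) :=
  [/\ {in L, forall d, star_ok d}, {in S &, forall i j, i != j -> covers L i j} &
      #|S :\: centers L| <= (#|S| < 4)].

Section Step.
Variables (S : {set 'I_n}) (p q a0 : 'I_n) (L' : seq star).
Hypotheses (pS : p \in S) (qS : q \in S) (pq : p != q).
Hypothesis pq_max : {in S &, forall a b, a != b -> le (s a b) (s p q)}.
Hypotheses (a0S' : a0 \in S :\ p :\ q) (pa0_le : le (s p a0) (s q a0)).

Local Notation S' := (S :\ p :\ q).

Definition step_stars : seq star :=
  [:: (p, [set q; a0]), (q, [set a0]) & [seq (a, [set p; q]) | a <- enum (S' :\ a0)] ++ L'].

Lemma step_stars_p : (p, [set q; a0]) \in step_stars.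
Proof. exact: mem_head. Qed.

Lemma step_stars_q : (q, [set a0]) \in step_stars.
Proof. by rewrite !in_cons eqxx orbT. Qed.

Lemma step_stars_rest a : a \in S' :\ a0 -> (a, [set p; q]) \in step_stars.
Proof. by move=> aS'; rewrite !in_cons mem_cat map_f ?orbT // mem_enum. Qed.

Lemma step_stars_old : {subset L' <= step_stars}.
Proof. by move=> d dL'; rewrite !in_cons mem_cat dL' !orbT. Qed.

Lemma size_step_stars : size step_stars = (size L' + #|S'|).+1.
Proof. by rewrite /= size_cat size_map -cardE (cardsD1 a0 S') a0S' add1n addnS addnC. Qed.

Lemma step_stars_ok : {in L', forall d, star_ok d} -> {in step_stars, forall d, star_ok d}.
Proof.
move=> L'ok d; rewrite !in_cons mem_cat => /or4P [/eqP-> | /eqP-> | /mapP [a] | /L'ok //].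
- exact/star_ok2/or_intror.
- by apply: star_ok_le1; rewrite cards1.
rewrite mem_enum !inE => /and4P [_ aq ap aS] ->; apply/star_ok2/or_introl.
exact: pq_max.
Qed.

Lemma step_stars_cover : {in S' &, forall i j, i != j -> covers L' i j} ->
  {in S &, forall i j, i != j -> covers step_stars i j}.
Proof.
move=> L'cover.
have rest j : j \in S -> j != p -> j != q -> j != a0 ->
    covers step_stars j p /\ covers step_stars j q.
  move=> jS jp jq ja0; have /step_stars_rest jstar : j \in S' :\ a0 by rewrite !inE ja0 jq jp.
  by split; apply: covers_leaf jstar _; rewrite !inE eqxx ?orbT.
have pq_cover i j : i \in [set p; q] -> j \in S -> i != j -> covers step_stars i j.
  case/set2P=> -> jS ij.
  - have [-> | jq] := eqVneq j q; first exact: covers_leaf step_stars_p (set21 _ _).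
    have [-> | ja0] := eqVneq j a0; first exact: covers_leaf step_stars_p (set22 _ _).
    by apply: covers_sym; case: (rest j jS _ jq ja0); rewrite // eq_sym.
  - have [-> | jp] := eqVneq j p.
      exact/covers_sym/(covers_leaf step_stars_p (set21 _ _)).
    have [-> | ja0] := eqVneq j a0; first exact: covers_leaf step_stars_q (set11 _).
    by apply: covers_sym; case: (rest j jS jp _ ja0); rewrite // eq_sym.
move=> i j iS jS ij.
have [ipq | ipq] := boolP (i \in [set p; q]); first exact: pq_cover.
have [jpq | jpq] := boolP (j \in [set p; q]).
  by apply/covers_sym/pq_cover; rewrite // eq_sym.
have S'_mem k : k \in S -> k \notin [set p; q] -> k \in S'.
  by rewrite !inE negb_or => -> /andP [-> ->].
by apply/(covers_sub step_stars_old)/L'cover; rewrite ?S'_mem.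
Qed.

Lemma step_stars_centers : S :\: centers step_stars \subset [set a0] :\: centers L'.
Proof.
apply/subsetP => i; rewrite !in_setD in_set1 => /andP [ic iS]; apply/andP; split.
  by apply: contra ic => /imsetP [d dL' ->]; apply/mem_centers/step_stars_old.
apply: contraNT ic => ia0.
have [-> | ip] := eqVneq i p; first exact: mem_centers step_stars_p.
have [-> | iq] := eqVneq i q; first exact: mem_centers step_stars_q.
apply: (mem_centers (d := (i, [set p; q]))); apply: step_stars_rest.
by rewrite !inE ia0 iq ip.
Qed.

Lemma step_cover_of : cover_of S' L' -> size L' <= #|S'| ^ 2 %/ 4 ->
    (a0 \notin centers L' -> #|S'| < 2) ->
  cover_of S step_stars /\ size step_stars <= #|S| ^ 2 %/ 4.
Proof.
move=> [L'ok L'cover _] sizeL' a0_center; have S'_card := cardsD1D1 pS qS pq.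
have S2 : 2 <= #|S| by apply/card_gt1P; exists p, q.
split; first split.
- exact: step_stars_ok.
- exact: step_stars_cover.
- apply: leq_trans (subset_leq_card step_stars_centers) _.
  have [a0c | a0c] := boolP (a0 \in centers L').
    suff /eqP -> : [set a0] :\: centers L' == set0 by rewrite cards0.
    by rewrite setD_eq0 sub1set.
  have -> : #|S| < 4 by move: (a0_center a0c); rewrite S'_card ltn_subLR.
  by rewrite (leq_trans (subset_leq_card (subsetDl _ _))) ?cards1.
rewrite size_step_stars -(sqr_div4_sub2 S2) -S'_card.
have -> : #|S| - 1 = #|S'|.+1 by rewrite S'_card -subSn.
by rewrite addnS ltnS leq_add2r.
Qed.

End Step.

Lemma cover_small (S : {set 'I_n}) :
  #|S| <= 2 -> exists L, cover_of S L /\ size L <= #|S| ^ 2 %/ 4.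
Proof.
move=> S2; have [S1 | /card_gt1P [p [q [pS qS pq]]]] := leqP #|S| 1.
  exists [::]; split=> //; split=> // [i j iS jS|].
    by move/card_le1_eqP: S1 => /(_ i j iS jS) ->; rewrite eqxx.
  have -> : #|S| < 4 by lia.
  exact: leq_trans (subset_leq_card (subsetDl _ _)) S1.
have <- : [set p; q] = S by apply/eqP; rewrite eqEcard subUset !sub1set pS qS cards2 pq.
have pstar : (p, [set q]) \in [:: (p, [set q])] := mem_head _ _.
exists [:: (p, [set q])]; rewrite cards2 pq; split=> //; split.
- by move=> d; rewrite mem_seq1 => /eqP ->; apply: star_ok_le1; rewrite cards1.
- have pq_cover : covers [:: (p, [set q])] p q by apply: covers_leaf pstar (set11 _).
  move=> i j /set2P [] -> /set2P [] ->; rewrite ?eqxx // => _.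
  exact: covers_sym pq_cover.
apply: leq_trans (_ : _ <= #|[set q]|) _; last by rewrite cards1 cards2 pq.
apply/subset_leq_card/subsetP => i.
rewrite in_setD => /andP [ic /set2P [ip | ->]]; last exact: set11.
by rewrite ip (mem_centers pstar) in ic.
Qed.

Lemma exists_cover (S : {set 'I_n}) : exists L, cover_of S L /\ size L <= #|S| ^ 2 %/ 4.
Proof.
have [m] := ubnP #|S|; elim: m S => // m IH S ltSm.
have [S2 | S3] := leqP #|S| 2; first exact: cover_small.
have [p [q [pS qS pq pq_max]]] := exists_max_pair s (ltnW S3).
set S' := S :\ p :\ q; have S'_card : #|S'| = #|S| - 2 := cardsD1D1 pS qS pq.
have ltS'm : #|S'| < m by rewrite S'_card; lia.
have [L' [covL' sizeL']] := IH S' ltS'm.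
(* Prefer a leaf [a0] that is already a center in [L'], so that [A a0 a0] stays covered. *)
have [a0 a0S' a0_center] : exists2 a0, a0 \in S' & (a0 \notin centers L' -> #|S'| < 2).
  case: (set_0Vmem (S' :&: centers L')) => [none | [a /setIP [aS' ac]]]; last first.
    by exists a; rewrite ?ac.
  have [a aS'] : exists a, a \in S' by apply/card_gt0P; rewrite S'_card; lia.
  exists a => // _; have [_ _ few] := covL'.
  by rewrite -(cardsID (centers L')) none cards0 (leq_ltn_trans few) // ltnS leq_b1.
have [pa0 | qa0] := htot (s p a0) (s q a0).
  by exists (step_stars S p q a0 L'); apply: step_cover_of.
have S'C : S :\ q :\ p = S' by rewrite /S' !setDDl setUC.
exists (step_stars S q p a0 L'); apply: step_cover_of; rewrite ?S'C 1?eq_sym //.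
by move=> a b aS bS ab; rewrite (s_sym q); apply: pq_max.
Qed.

Definition completion (S : {set 'I_n}) (L : seq star) :=
  L ++ [seq (i, set0) | i <- enum (S :\: centers L)].

Lemma completion_cover (S : {set 'I_n}) L : cover_of S L ->
  [/\ {in completion S L, forall d, star_ok d}, {in S &, forall i j, covers (completion S L) i j}
    & size (completion S L) = size L + #|S :\: centers L|].
Proof.
move=> [Lok Lcover _]; have L_sub : {subset L <= completion S L}.
  by move=> d dL; rewrite mem_cat dL.
split; last by rewrite size_cat size_map -cardE.
  move=> d; rewrite mem_cat => /orP [/Lok // | /mapP [i _ ->]].
  by apply: star_ok_le1; rewrite cards0.
move=> i j iS jS; have [<- | ij] := eqVneq i j; last first.
  exact: covers_sub L_sub (Lcover i j iS jS ij).
have [ic | inc] := boolP (i \in centers L).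
  by case/imsetP: ic => d dL ->; apply: covers_sub L_sub (covers_center dL).
apply: (covers_center (d := (i, set0))).
by rewrite mem_cat map_f ?orbT // mem_enum in_setD inc iS.
Qed.

Lemma star_sum (L : seq star) i j : {in L, forall d, star_ok d} -> covers L i j ->
  Amat i j = \big[add/zero]_(k < size L)
               mul (star_vec (tnth (in_tuple L) k) i) (star_vec (tnth (in_tuple L) k) j).
Proof.
move=> Lok [d dL dij]; symmetry; apply: bigadd_attained.
  by move=> k; apply/star_vec_le/Lok/mem_tnth.
by case/(tnthP (in_tuple L)): dL => k dk; exists k; rewrite -dk.
Qed.

Lemma star_decomposition (A : 'I_n -> 'I_n -> T) : (forall i j, A i j = Amat i j) ->
  exists m, [/\ m <= maxn n (n ^ 2 %/ 4), 4 <= n -> m <= n ^ 2 %/ 4 & support3_rep A m].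
Proof.
move=> defA; have [L [covL sizeL]] := exists_cover [set: 'I_n].
have [_ _ few_centers] := covL; have [L1ok L1cover sizeL1] := completion_cover covL.
rewrite cardsT card_ord in sizeL few_centers.
set L1 := completion _ L in L1ok L1cover sizeL1.
exists (size L1); split.
- rewrite sizeL1; apply: leq_maxn_sqr_div4 => //.
  by rewrite -[leqRHS]card_ord -cardsT subset_leq_card ?subsetDl.
- move=> n4; rewrite sizeL1; move: few_centers.
  by rewrite ltnNge n4 leqn0 => /eqP ->; rewrite addn0.
exists (fun k => star_vec (tnth (in_tuple L1) k)); split.
  by move=> k; apply/star_vec_support/L1ok/mem_tnth.
by move=> i j; rewrite defA; apply: star_sum => //; apply: L1cover; rewrite inE.
Qed.

End Stars.

Lemma cp_support3_rep n (A : 'I_n -> 'I_n -> T) : completely_positive add mul zero A ->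
  exists m, [/\ m <= maxn n (n ^ 2 %/ 4), 4 <= n -> m <= n ^ 2 %/ 4 & support3_rep A m].
Proof.
by move=> /cp_factor [c [s [s_sym s_diag defA]]]; apply: star_decomposition s_sym s_diag _ defA.
Qed.

End Incline.

Lemma cp_rank_le (T : Type) (add mul : T -> T -> T) (zero : T) n (A : 'I_n -> 'I_n -> T) r m
    (B : 'I_n -> 'I_m -> T) :
  is_cp_rank add mul zero A r -> (forall i j, A i j = mul_tr add mul zero B i j) -> r <= m.
Proof.
by move=> [_ r_min] defA; rewrite leqNgt; apply/negP => mr; apply: (r_min m mr); exists B.
Qed.

Theorem mainTheorem6 (T : Type) (add mul : T -> T -> T) (zero one : T)
  (hL : is_normal_incline add mul zero one) (htot : totally_ordered add)
  (n : nat) (A : 'I_n -> 'I_n -> T)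
  (hA : completely_positive add mul zero A) :
  (forall r, is_cp_rank add mul zero A r -> r <= maxn n (n ^ 2 %/ 4)) /\
  (4 <= n ->
   exists m (b : 'I_m -> 'I_n -> T),
     m <= n ^ 2 %/ 4 /\
     (forall j, exists S : {set 'I_n}, #|S| <= 3 /\
                  forall i, i \notin S -> b j i = zero) /\
     (forall i i', A i i' = \big[add/zero]_(j < m) mul (b j i) (b j i'))).
Proof.
have [hI [mulC [add0 [mul1 [hLI [hsqrt _]]]]]] := hL.
have [m [m_le m_le4 [b [b_supp defA]]]] :=
  cp_support3_rep hI mulC add0 (fun x => (mul1 x).1) hLI hsqrt htot hA.
split=> [r r_rank | n4]; last by exists m, b; split; [apply: m_le4 | split].
exact: leq_trans (cp_rank_le (B := fun i l => b l i) r_rank defA) m_le.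
Qed.
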